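(* Let $\mathcal{A}^{\mathbb{Z}}$ be a unital associative $\mathbb{Z}$-algebra which is finitely generated and free as a $\mathbb{Z}$-module, and for a field $\mathbb{F}$ write $\mathcal{A}^{\mathbb{F}}=\mathcal{A}^{\mathbb{Z}}\otimes_{\mathbb{Z}}\mathbb{F}$. Let $\mathbb{K}$ be a field with $\mathrm{char}(\mathbb{K})=0$. Then $\mathcal{A}^{\mathbb{K}}$ is semisimple if and only if $\mathcal{A}^{\mathbb{F}_p}$ is semisimple for infinitely many primes $p$.
   Context: $\mathbb{F}_p$ denotes the field with $p$ elements. *)

From HB Require Import structures.
From mathcomp Require Import all_boot all_order all_algebra.
Set Implicit Arguments. Unset Strict Implicit. Unset Printing Implicit Defensive.
Import Order.TTheory GRing.Theory Num.Theory.
Local Open Scope ring_scope.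

(* A unital associative Z-algebra A^Z, free of finite rank n as a Z-module,
   is given by its integer structure constants w.r.t. a Z-basis b_0..b_(n-1):
     b_i * b_j = \sum_k c i j k * b_k,   unit = \sum_i e i * b_i.          *)
Definition zalg_assoc (n : nat) (c : 'I_n -> 'I_n -> 'I_n -> int) : Prop :=
  forall i j l m : 'I_n,
    \sum_(k < n) c i j k * c k l m = \sum_(k < n) c j l k * c i k m.

Definition zalg_unit (n : nat) (c : 'I_n -> 'I_n -> 'I_n -> int)
    (e : 'I_n -> int) : Prop :=
  forall j k : 'I_n,
    \sum_(i < n) e i * c i j k = (j == k)%:Z /\
    \sum_(i < n) e i * c j i k = (j == k)%:Z.

(* A^F = A^Z (x)_Z F is F^n (row vectors) with the multiplication given by
   the images in F of the structure constants. *)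
Definition algmul (F : fieldType) (n : nat) (c : 'I_n -> 'I_n -> 'I_n -> int)
    (x y : 'rV[F]_n) : 'rV[F]_n :=
  \row_(k < n) \sum_(i < n) \sum_(j < n) x 0 i * y 0 j * (c i j k)%:~R.

Definition left_ideal (F : fieldType) (n : nat)
    (c : 'I_n -> 'I_n -> 'I_n -> int) (U : 'M[F]_n) : Prop :=
  forall a x : 'rV[F]_n, (x <= U)%MS -> (algmul c a x <= U)%MS.

(* A^F is semisimple: semisimple as a left module over itself, i.e. every
   left ideal has a complementary left ideal (A = U (+) W). *)
Definition alg_semisimple (F : fieldType) (n : nat)
    (c : 'I_n -> 'I_n -> 'I_n -> int) : Prop :=
  forall U : 'M[F]_n, left_ideal c U ->
    exists W : 'M[F]_n, left_ideal c W /\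
      (1%:M <= U + W)%MS /\ (U :&: W <= (0 : 'M[F]_n))%MS.

(* The trace form t(x, y) = tr (L_x L_y) of the left regular representation
   has an integer Gram matrix G on the Z-basis, so the single integer det G
   controls A^F for every field F.  If det G <> 0 in F, A^F is semisimple:
   for a projection P onto a left ideal U and dual bases (e_i), (g_i) for t,
   the average sum_i L_(g_i) P L_(e_i) is again a projection onto U, it
   commutes with all left multiplications, and its kernel is a complementary
   left ideal; it fixes U because sum_i e_i g_i = 1.  Conversely, if
   char F = 0 or char F > n and A^F is semisimple, split 1 = r + w along the
   radical R of t and a complementary left ideal: r is an idempotent of R,
   so rank L_r = tr L_r = t(r, 1) = 0 in F, whence r = 0 and R = 0.  Hence
   A^K and A^(F_p), for p > n, are semisimple exactly when det G does not
   vanish in the field, which holds for all large p iff det G <> 0. *)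

From HB Require Import structures.
From mathcomp Require Import all_boot all_order all_algebra.
Import Order.TTheory GRing.Theory Num.Theory.
Set Implicit Arguments. Unset Strict Implicit. Unset Printing Implicit Defensive.
Local Open Scope ring_scope.

Lemma mxtrace_idem (F : fieldType) n (E : 'M[F]_n) :
  E *m E = E -> \tr E = (\rank E)%:R.
Proof.
move=> idE; have [B BC] := row_fullP (col_base_full E).
have [B' RB'] := row_freeP (row_base_free E).
rewrite -mxtrace1 -{1}(mulmx_base E) mxtrace_mulC; congr (\tr _).
move: (mulmx_base E) BC RB'; move: (col_base E) (row_base E) => C R CR BC RB'.
transitivity (B *m (C *m R *m (C *m R)) *m B').
  by rewrite !mulmxA BC mul1mx -!mulmxA RB' mulmx1.
have CRCR : C *m R *m (C *m R) = C *m R by rewrite CR idE.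
by rewrite CRCR !mulmxA BC mul1mx RB'.
Qed.

Lemma retraction_compl (F : fieldType) m n (U : 'M[F]_(m, n)) (Q : 'M_n) :
    (forall x : 'rV_n, (x *m Q <= U)%MS) ->
    (forall x : 'rV_n, (x <= U)%MS -> x *m Q = x) ->
  (1%:M <= U + kermx Q)%MS /\ (U :&: kermx Q <= (0 : 'M_n))%MS.
Proof.
move=> QU Qid; split; apply/row_subP => i.
  set y := row i _; have -> : y = y *m Q + (y - y *m Q) by rewrite addrC subrK.
  apply: addmx_sub_adds; first exact: QU.
  by apply/sub_kermxP; rewrite mulmxBl (Qid _ (QU y)) subrr.
have := row_sub i (U :&: kermx Q)%MS; rewrite sub_capmx => /andP [xU /sub_kermxP xQ].
by rewrite -(Qid _ xU) xQ sub0mx.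
Qed.

(* Characteristic 0 counts as larger than every [n]. *)
Definition pchar_gt (F : fieldType) (n : nat) : Prop :=
  forall i, (0 < i <= n)%N -> i%:R != 0 :> F.

Definition cmat n (c : 'I_n -> 'I_n -> 'I_n -> int) i : 'M[int]_n :=
  \matrix_(j, k) c i j k.

Definition gram_int n (c : 'I_n -> 'I_n -> 'I_n -> int) : 'M[int]_n :=
  \matrix_(i, j) \tr (cmat c i *m cmat c j).

Section AlgebraStructure.
Variables (F : fieldType) (n : nat) (c : 'I_n -> 'I_n -> 'I_n -> int).

Local Notation "x ** y" := (algmul c x y) (at level 40, left associativity).

Definition lmul (x : 'rV[F]_n) : 'M[F]_n := \sum_i x 0 i *: map_mx intr (cmat c i).

Lemma lmul_is_linear : linear lmul.
Proof.
move=> a x y; rewrite /lmul scaler_sumr -big_split; apply: eq_bigr => i _.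
by rewrite !mxE scalerDl scalerA.
Qed.

HB.instance Definition _ :=
  GRing.isLinear.Build F 'rV[F]_n 'M[F]_n _ lmul lmul_is_linear.

Lemma lmul_delta i : lmul 'e_i = map_mx intr (cmat c i).
Proof.
rewrite /lmul (bigD1 i) //= big1 => [|j ji]; first by rewrite mxE !eqxx scale1r addr0.
by rewrite mxE (negPf ji) scale0r.
Qed.

Lemma lmulE x : lmul x = \sum_i x 0 i *: lmul 'e_i.
Proof. by apply: eq_bigr => i _; rewrite lmul_delta. Qed.

Lemma algmulE x y : x ** y = y *m lmul x.
Proof.
apply/rowP => k; rewrite !mxE exchange_big /=; apply: eq_bigr => j _.
rewrite /lmul summxE mulr_sumr; apply: eq_bigr => i _.
by rewrite !mxE mulrCA mulrA.
Qed.

Lemma kermx_left_ideal Q :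
  (forall a, lmul a *m Q = Q *m lmul a) -> left_ideal c (kermx Q).
Proof.
move=> QC a x /sub_kermxP xQ; apply/sub_kermxP.
by rewrite algmulE -mulmxA QC mulmxA xQ mul0mx.
Qed.

Definition tform (x y : 'rV[F]_n) : F := \tr (lmul x *m lmul y).

Definition gram : 'M[F]_n := \matrix_(i, j) tform 'e_i 'e_j.

Lemma tformC x y : tform x y = tform y x.
Proof. exact: mxtrace_mulC. Qed.

Lemma tformE x y : tform x y = (x *m gram *m y^T) 0 0.
Proof.
rewrite /tform (lmulE x) (lmulE y) mulmx_suml raddf_sum /= !mxE.
under eq_bigr do rewrite mulmx_sumr raddf_sum /=.
under [RHS]eq_bigr do rewrite !mxE mulr_suml.
rewrite [RHS]exchange_big; apply: eq_bigr => i _; apply: eq_bigr => j _.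
by rewrite -scalemxAl -scalemxAr scalerA mxtraceZ mxE mulrAC.
Qed.

Lemma tform_delta_r x j : tform x 'e_j = (x *m gram) 0 j.
Proof. by rewrite tformE trmx_delta -colE mxE. Qed.

Lemma sub_kermx_gram z : reflect (forall y, tform z y = 0) (z <= kermx gram)%MS.
Proof.
apply: (iffP sub_kermxP) => [zG y | z_rad]; first by rewrite tformE zG !mul0mx mxE.
by apply/rowP => j; rewrite -tform_delta_r z_rad mxE.
Qed.

Lemma gram_map : gram = map_mx intr (gram_int c).
Proof.
by apply/matrixP => i j; rewrite !mxE /tform !lmul_delta -map_mxM trace_map_mx.
Qed.

Section Associative.
Hypothesis Hassoc : zalg_assoc c.

Lemma lmul_deltaM i j : lmul ('e_j *m lmul 'e_i) = lmul 'e_j *m lmul 'e_i.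
Proof.
apply/matrixP => l m; rewrite !lmul_delta -map_mxM !mxE /lmul summxE /cmat.
rewrite (eq_bigr (fun k => (c i j k * c k l m)%:~R)) => [|k _].
  by rewrite -rmorph_sum Hassoc /=; congr (_ %:~R); apply: eq_bigr => k _; rewrite !mxE.
by rewrite -rowE !mxE intrM.
Qed.

Lemma lmulM x y : lmul (x ** y) = lmul y *m lmul x.
Proof.
rewrite algmulE (lmulE x) mulmx_sumr mulmx_sumr linear_sum.
apply: eq_bigr => i _; rewrite -!scalemxAr linearZ /=; congr (_ *: _).
rewrite {1}(row_sum_delta y) (lmulE y) mulmx_suml mulmx_suml linear_sum.
by apply: eq_bigr => j _; rewrite -!scalemxAl linearZ /= lmul_deltaM.
Qed.

Lemma tformA x y z : tform (x ** y) z = tform x (y ** z).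
Proof. by rewrite /tform !lmulM -mulmxA mxtrace_mulC mulmxA. Qed.

Lemma radical_left_ideal : left_ideal c (kermx gram).
Proof.
move=> a x /sub_kermx_gram x_rad; apply/sub_kermx_gram => y.
by rewrite tformC -tformA tformC x_rad.
Qed.

Section Unital.
Variable e : 'I_n -> int.
Hypothesis Hunit : zalg_unit c e.

Definition alg1 : 'rV[F]_n := \row_i (e i)%:~R.

Lemma lmul1 : lmul alg1 = 1%:M.
Proof.
apply/matrixP => j k; rewrite /lmul summxE !mxE.
under eq_bigr do rewrite !mxE -intrM.
by rewrite -rmorph_sum /= (Hunit j k).1.
Qed.

Lemma algmulr1 x : x ** alg1 = x.
Proof.
apply/rowP => k; rewrite !mxE.
transitivity (\sum_i x 0 i * ((i == k)%:Z)%:~R).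
  apply: eq_bigr => i _; rewrite -(Hunit i k).2 rmorph_sum mulr_sumr /=.
  by apply: eq_bigr => j _; rewrite mxE intrM mulrA.
rewrite (bigD1 k) //= big1 => [|i ik]; first by rewrite eqxx mulr1 addr0.
by rewrite (negPf ik) mulr0.
Qed.

Lemma tform1r x : tform x alg1 = \tr (lmul x).
Proof. by rewrite /tform lmul1 mulmx1. Qed.

Lemma compl_left_ideal_right_unit U W r w :
    left_ideal c U -> left_ideal c W -> (U :&: W <= (0 : 'M_n))%MS ->
    (r <= U)%MS -> (w <= W)%MS -> r + w = alg1 ->
  forall x, (x <= U)%MS -> x ** r = x.
Proof.
move=> LU LW capUW rU wW rw1 x xU.
have xwU : (x ** w <= U)%MS.
  have -> : x ** w = x - x ** r.
    by rewrite -{2}(algmulr1 x) -rw1 !algmulE mulmxDl addrC addKr.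
  by rewrite addmx_sub ?eqmx_opp ?LU.
have : (x ** w <= (0 : 'M_n))%MS.
  by apply: submx_trans _ capUW; rewrite sub_capmx xwU /=; apply: LW.
rewrite submx0 => /eqP xw0.
by rewrite -{2}(algmulr1 x) -rw1 !algmulE mulmxDl -(algmulE x w) xw0 addr0.
Qed.

Section LargeCharacteristic.
Hypothesis Hchar : pchar_gt F n.

Lemma idem_trace0_eq0 r : r ** r = r -> \tr (lmul r) = 0 -> r = 0.
Proof.
move=> rr; rewrite mxtrace_idem -?lmulM ?rr //.
have [/eqP|rk_gt0] := posnP (\rank (lmul r)).
  by rewrite mxrank_eq0 => /eqP Lr0 _; rewrite -(algmulr1 r) algmulE Lr0 mulmx0.
by move/eqP; rewrite (negPf (Hchar _)) // rk_gt0 rank_leq_col.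
Qed.

Lemma semisimple_gram_unit : alg_semisimple F c -> gram \in unitmx.
Proof.
move=> ss; rewrite -row_free_unit -kermx_eq0 -submx0.
have [W [LW [UW capUW]]] := ss _ radical_left_ideal.
have /sub_addsmxP [[r w] /= alg1_rw] : (alg1 <= kermx gram + W)%MS.
  exact: submx_trans (submx1 _) UW.
have rU : (r *m kermx gram <= kermx gram)%MS := submxMl _ _.
have r_unit := compl_left_ideal_right_unit radical_left_ideal LW capUW rU
  (submxMl _ _) (esym alg1_rw).
have r0 : r *m kermx gram = 0.
  apply: idem_trace0_eq0; first exact: r_unit.
  by rewrite -tform1r; move/sub_kermx_gram: rU; apply.
apply/row_subP => i; rewrite -(r_unit _ (row_sub i _)) algmulE r0 mul0mx.
exact: sub0mx.
Qed.

End LargeCharacteristic.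

Section InvertibleGram.
Hypothesis gram_unit : gram \in unitmx.

Definition dual i : 'rV[F]_n := row i (invmx gram).

Lemma tform_dual i y : tform (dual i) y = y 0 i.
Proof.
by rewrite tformE /dual rowE -(mulmxA _ (invmx gram)) mulVmx // mulmx1 -rowE !mxE.
Qed.

Lemma dual_expansion x : x = \sum_k tform x 'e_k *: dual k.
Proof.
by under eq_bigr do rewrite tform_delta_r; rewrite -mulmx_sum_row mulmxK.
Qed.

Lemma tform_suml I (s : seq I) (P : pred I) (x : I -> 'rV[F]_n) y :
  tform (\sum_(i <- s | P i) x i) y = \sum_(i <- s | P i) tform (x i) y.
Proof. by rewrite /tform (raddf_sum lmul) mulmx_suml raddf_sum. Qed.

Lemma casimir : \sum_i 'e_i ** dual i = alg1.
Proof.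
rewrite [LHS]dual_expansion [RHS]dual_expansion; apply: eq_bigr => k _.
congr (_ *: _); rewrite tform_suml tformC tform1r.
apply: eq_bigr => i _.
by rewrite tformC -tformA tformC tform_dual algmulE -rowE mxE.
Qed.

Definition avg_mx (P : 'M[F]_n) : 'M[F]_n :=
  \sum_i lmul (dual i) *m P *m lmul 'e_i.

Lemma avg_mx1 : avg_mx 1%:M = 1%:M.
Proof.
rewrite /avg_mx; under eq_bigr do rewrite mulmx1 -lmulM.
by rewrite -(raddf_sum lmul) /= casimir lmul1.
Qed.

Lemma lmul_avg_mxC P a : lmul a *m avg_mx P = avg_mx P *m lmul a.
Proof.
pose B x y := lmul x *m P *m lmul y.
have expand_l x y : B x y = \sum_k tform x 'e_k *: B (dual k) y.
  rewrite /B {1}(dual_expansion x) (raddf_sum lmul) /= !mulmx_suml.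
  by apply: eq_bigr => k _; rewrite linearZ -!scalemxAl.
have expand_r x y : B x y = \sum_i tform (dual i) y *: B x 'e_i.
  rewrite /B {1}(row_sum_delta y) (raddf_sum lmul) /= mulmx_sumr.
  by apply: eq_bigr => i _; rewrite linearZ -scalemxAr tform_dual.
rewrite mulmx_sumr mulmx_suml.
transitivity (\sum_i \sum_k tform (dual i ** a) 'e_k *: B (dual k) 'e_i).
  by apply: eq_bigr => i _; rewrite !mulmxA -lmulM -expand_l.
rewrite exchange_big; apply: eq_bigr => k _.
rewrite -mulmxA -lmulM -/(B _ _) expand_r.
by apply: eq_bigr => i _; rewrite tformA.
Qed.

Lemma gram_unit_semisimple : alg_semisimple F c.
Proof.
move=> U LU.
have [P PU Pid] : exists2 P : 'M_n, forall x : 'rV_n, (x *m P <= U)%MS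
    & forall x : 'rV_n, (x <= U)%MS -> x *m P = x.
  by exists (proj_mx U U^C%MS) => [x|x xU]; rewrite ?proj_mx_sub ?proj_mx_id ?capmx_compl.
have avgU (x : 'rV_n) : (x *m avg_mx P <= U)%MS.
  rewrite mulmx_sumr; apply: summx_sub => i _; rewrite !mulmxA -algmulE.
  exact/LU/PU.
have avg_id (x : 'rV_n) : (x <= U)%MS -> x *m avg_mx P = x.
  move=> xU; rewrite -{2}(mulmx1 x) -avg_mx1 !mulmx_sumr; apply: eq_bigr => i _.
  by rewrite !mulmxA mulmx1 Pid // -algmulE; apply: LU.
exists (kermx (avg_mx P)); split; first exact: kermx_left_ideal (lmul_avg_mxC P).
exact: retraction_compl.
Qed.

End InvertibleGram.

End Unital.

End Associative.

End AlgebraStructure.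

Lemma gram_unitE (F : fieldType) n (c : 'I_n -> 'I_n -> 'I_n -> int) :
  (gram F c \in unitmx) = ((\det (gram_int c))%:~R != 0 :> F).
Proof. by rewrite unitmxE unitfE gram_map det_map_mx. Qed.

Lemma pchar0_gt (K : fieldType) : [pchar K] =i pred0 -> forall n, pchar_gt K n.
Proof. by move=> HK n i /andP [i_gt0 _]; rewrite ((pcharf0P K).1 HK) -lt0n. Qed.

Lemma pchar0_intr_eq0 (K : fieldType) (z : int) :
  [pchar K] =i pred0 -> (z%:~R == 0 :> K) = (z == 0).
Proof.
move=> HK; case: z => m; rewrite ?NegzE ?mulrNz ?oppr_eq0 /= ((pcharf0P K).1 HK) //.
Qed.

Lemma pchar_gt_Fp p n : prime p -> (n < p)%N -> pchar_gt 'F_p n.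
Proof.
move=> p_pr n_lt_p i /andP [i_gt0 le_i_n].
by rewrite -(dvdn_pcharf (pchar_Fp p_pr)) gtnNdvd // (leq_ltn_trans le_i_n).
Qed.

Lemma Fp_intr_eq0 p (z : int) : prime p -> (z%:~R == 0 :> 'F_p) = (p %| `|z|)%N.
Proof. by move=> p_pr; rewrite -(dvdz_pcharf (pchar_Fp p_pr)). Qed.


Theorem propositionA2 (n : nat) (c : 'I_n -> 'I_n -> 'I_n -> int)
    (e : 'I_n -> int) (Hassoc : zalg_assoc c) (Hunit : zalg_unit c e)
    (K : fieldType) (HK : [pchar K] =i pred0) :
  alg_semisimple K c <->
  (forall N : nat, exists p : nat,
      (N < p)%N /\ prime p /\ alg_semisimple 'F_p c).
Proof.
split=> [ssK N | ssFp].
  have := semisimple_gram_unit Hassoc Hunit (@pchar0_gt K HK n) ssK.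
  rewrite gram_unitE pchar0_intr_eq0 // => d_neq0.
  have [p] := prime_above (maxn N `|\det (gram_int c)|).
  rewrite gtn_max => /andP [N_lt_p d_lt_p] p_pr.
  exists p; do 2!split=> //; apply: (gram_unit_semisimple Hassoc Hunit).
  by rewrite gram_unitE Fp_intr_eq0 // gtnNdvd // absz_gt0.
have [p [n_lt_p [p_pr ssFp_p]]] := ssFp n.
have := semisimple_gram_unit Hassoc Hunit (pchar_gt_Fp p_pr n_lt_p) ssFp_p.
rewrite gram_unitE Fp_intr_eq0 // => p_ndvd_d.
apply: (gram_unit_semisimple Hassoc Hunit); rewrite gram_unitE pchar0_intr_eq0 //.
by apply: contraNneq p_ndvd_d => ->; rewrite dvdn0.
Qed.
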